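(* In the setting below, let $\Delta=\{x\in\mathbb{R}[T_PM,T_PM]: A(v)x(v)=0\text{ for all }v\in T_PM\}$. Then: \begin{enumerate} \item if $x\in\mathbb{R}[T_PM,T_PM]$ and $f\in\mathbb{R}[T_PM,\mathbb{R}]$ is nonzero with $f\cdot x\in\Delta$, then $x\in\Delta$; \item if $T:T_PM\to T_PM$ is the differential at $P$ of a local isometry of $M$ fixing $P$ and $x\in\Delta$, then the polynomial map $Tx$ defined by $(Tx)(v)=T\,x(T^{-1}v)$ also lies in $\Delta$. \end{enumerate}
   Context: $M$ is a locally isotropic pseudo-Riemannian manifold of signature $(p,q)$, $q>p\ge2$ (locally isotropic: for every $P$ and nonzero $x,y\in T_PM$ with $(x,x)=(y,y)$ some local isometry fixing $P$ has differential mapping $x$ to $y$), $P\in M$, $n\ge1$, and $S:T_PM\to\mathrm{Hom}(T_PM,T_PM)$, $S\not\equiv0$, satisfies: each $S(v)$ self-adjoint; $S(v)v=0$; $S(-v)=-S(v)$; $S(Tv)=T\circ S(v)\circ T^{-1}$ for differentials $T$ of local isometries fixing $P$; and $S$ is a homogeneous polynomial of degree $2n+1$ in the coordinates of $v$. The spectrum of $S(v)$ for unit timelike $v$ is $\{0,\pm\lambda_1,\dots,\pm\lambda_l\}$, $\lambda_i>0$, $l\ge1$; $\sigma_k(\lambda)$ is the $k$-th elementary symmetric function of $\lambda_1^2,\dots,\lambda_l^2$; and $A(v)=S(v)^{2l}+\sum_{k=1}^l\sigma_k(\lambda)(v,v)^{(2n+1)k}S(v)^{2l-2k}$. $\mathbb{R}[T_PM,W]$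 denotes polynomial maps $T_PM\to W$. *)

(* R : rcfType (the paper's field is the reals, which is an
   rcfType); the tangent space T_P M is modelled as column vectors 'cV[R]_(p+q). *)
From HB Require Import structures.
From mathcomp Require Import all_boot all_order all_algebra.
From mathcomp Require Import mpoly.
From mathcomp Require Import complex.
Set Implicit Arguments.
Unset Strict Implicit.
Unset Printing Implicit Defensive.
Import Order.TTheory GRing.Theory Num.Theory.
Local Open Scope ring_scope.

Section Defs.
Variables (R : rcfType) (p q : nat).
Local Notation N := (p + q)%N.
Local Notation V := 'cV[R]_N.

(* Gram matrix of the metric on T_P M in an orthonormal basis:
   p entries -1 (timelike directions), q entries +1. *)
Definition gram : 'M[R]_N :=
  diag_mx (\row_(i < N) (if (i < p)%N then -1 else 1)).

Definition ip (x y : V) : R := (x^T *m gram *m y) 0 0.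

Definition polyfun (f : V -> R) : Prop :=
  exists P : {mpoly R[N]}, forall v, f v = P.@[fun k => v k 0].

Definition polymap (x : V -> V) : Prop :=
  exists P : 'I_N -> {mpoly R[N]}, forall v i, x v i 0 = (P i).@[fun k => v k 0].

Definition homog_polymx (d : nat) (S : V -> 'M[R]_N) : Prop :=
  exists P : 'I_N -> 'I_N -> {mpoly R[N]},
    (forall i j, P i j \is d.-homog) /\
    forall v i j, S v i j = (P i j).@[fun k => v k 0].

(* The set G of differentials at P of local isometries of M fixing P:
   a group of linear isometries of (T_PM, ( , )) which, by local isotropy
   at P, acts transitively on each set {x <> 0 : (x,x) = c}. *)
Definition isometry_group (G : 'M[R]_N -> Prop) : Prop :=
  [/\ G 1%:M,
      (forall T, G T -> T \in unitmx /\ forall x y, ip (T *m x) (T *m y) = ip x y),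
      (forall T1 T2, G T1 -> G T2 -> G (T1 *m T2)),
      (forall T, G T -> G (invmx T)) &
      (forall x y : V, x != 0 -> y != 0 -> ip x x = ip y y ->
         exists2 T, G T & T *m x = y)].

Definition cspec (B : 'M[R]_N) (z : R[i]) : Prop :=
  eigenvalue (map_mx (fun a : R => Complex a 0) B) z.

Definition sigma (l : nat) (lam : 'I_l -> R) (k : nat) : R :=
  \sum_(I : {set 'I_l} | #|I| == k) \prod_(i in I) lam i ^+ 2.

Definition Aop (n l : nat) (lam : 'I_l -> R) (S : V -> 'M[R]_N) (v : V)
  : 'M[R]_N :=
  S v ^+ (2 * l) +
  \sum_(1 <= k < l.+1)
     (sigma lam k * ip v v ^+ ((2 * n + 1) * k)) *: S v ^+ (2 * l - 2 * k).

Definition Delta (n l : nat) (lam : 'I_l -> R) (S : V -> 'M[R]_N)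
  (x : V -> V) : Prop :=
  polymap x /\ forall v, Aop n lam S v *m x v = 0.

End Defs.

From HB Require Import structures.
From mathcomp Require Import all_boot all_order all_algebra.
From mathcomp Require Import mpoly.
From mathcomp Require Import complex.
Set Implicit Arguments.
Unset Strict Implicit.
Unset Printing Implicit Defensive.
Import Order.TTheory GRing.Theory Num.Theory.
Local Open Scope ring_scope.

(* Part 1 holds because polynomial functions on T_P M have no zero divisors:
   if f g = 0 and f w <> 0, restrict f and g to the line through v and w; there
   they become univariate polynomials whose product has infinitely many roots,
   so the restriction of g vanishes, in particular g v = 0.  Take for g a
   coordinate of v |-> A(v) x(v), which is polynomial since S and (v, v) are.
   Part 2 holds because A inherits the equivariance of S, as isometries
   preserve (v, v): A(T w) = T A(w) T^-1. *)

Lemma poly_eq0_of_horner_eq0 (R : numDomainType) (P : {poly R}) :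
  (forall t, P.[t] = 0) -> P = 0.
Proof.
move=> P0; apply: (@roots_geq_poly_eq0 _ _ [seq k%:R | k <- iota 0 (size P)]).
- by apply/allP => t _; apply/rootP.
- by rewrite map_inj_uniq ?iota_uniq // => a b /eqP; rewrite eqr_nat => /eqP.
- by rewrite size_map size_iota.
Qed.

Lemma conj_mxX (K : comUnitRingType) n (T M : 'M[K]_n) k : T \in unitmx ->
  (T *m M *m invmx T) ^+ k = T *m M ^+ k *m invmx T.
Proof.
move=> Tu; elim: k => [|k IHk]; first by rewrite !expr0 mulmx1 mulmxV.
rewrite !exprS IHk -!mulmxE !mulmxA; congr (_ *m _).
by rewrite -[T *m M *m invmx T *m T]mulmxA mulVmx // mulmx1.
Qed.

Section PolynomialFunctions.
Context {R : rcfType} {p q : nat}.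
Local Notation N := (p + q)%N.
Local Notation V := 'cV[R]_N.
Implicit Types (f g : V -> R) (v u w : V).

Lemma eq_polyfun f g : polyfun f -> f =1 g -> polyfun g.
Proof. by move=> [P fP] fg; exists P => v; rewrite -fg. Qed.

Lemma polyfun_cst (c : R) : polyfun (fun _ : V => c).
Proof. by exists c%:MP => v; rewrite mevalC. Qed.

Lemma polyfun_coord (k : 'I_N) : polyfun (fun v : V => v k 0).
Proof. by exists 'X_k => v; rewrite mevalXU. Qed.

Lemma polyfunD f g : polyfun f -> polyfun g -> polyfun (fun v => f v + g v).
Proof. by move=> [P fP] [Q gQ]; exists (P + Q) => v; rewrite mevalD fP gQ. Qed.

Lemma polyfunM f g : polyfun f -> polyfun g -> polyfun (fun v => f v * g v).
Proof. by move=> [P fP] [Q gQ]; exists (P * Q) => v; rewrite mevalM fP gQ. Qed.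

Lemma polyfunX f k : polyfun f -> polyfun (fun v => f v ^+ k).
Proof.
move=> Pf; elim: k => [|k IHk].
  by apply: (eq_polyfun (polyfun_cst 1)) => v; rewrite expr0.
by apply: (eq_polyfun (polyfunM Pf IHk)) => v; rewrite exprS.
Qed.

Lemma polyfun_sum (I : Type) (r : seq I) (P : pred I) (F : I -> V -> R) :
  (forall i, polyfun (F i)) -> polyfun (fun v => \sum_(i <- r | P i) F i v).
Proof.
move=> PF; elim: r => [|i r IHr].
  by apply: (eq_polyfun (polyfun_cst 0)) => v; rewrite big_nil.
case Pi: (P i).
  by apply: (eq_polyfun (polyfunD (PF i) IHr)) => v; rewrite big_cons Pi.
by apply: (eq_polyfun IHr) => v; rewrite big_cons Pi.
Qed.

Definition polymx m k (M : V -> 'M[R]_(m, k)) : Prop :=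
  forall i j, polyfun (fun v => M v i j).

Lemma polymapP (x : V -> V) : polymap x <-> polymx x.
Proof.
split=> [[P xP] i j | Px]; first by exists (P i) => v; rewrite (ord1 j) xP.
by have [P xP] := fin_all_exists (Px ^~ 0); exists P.
Qed.

Lemma polymx_cst m k (A : 'M[R]_(m, k)) : polymx (fun _ => A).
Proof. by move=> i j; apply: polyfun_cst. Qed.

Lemma polymx_id : polymx (fun v : V => v).
Proof. by move=> i j; rewrite (ord1 j); apply: polyfun_coord. Qed.

Lemma polymx_tr m k (M : V -> 'M[R]_(m, k)) :
  polymx M -> polymx (fun v => (M v)^T).
Proof. by move=> PM i j; apply: (eq_polyfun (PM j i)) => v; rewrite mxE. Qed.

Lemma polymxD m k (M M' : V -> 'M[R]_(m, k)) :
  polymx M -> polymx M' -> polymx (fun v => M v + M' v).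
Proof.
move=> PM PM' i j.
by apply: (eq_polyfun (polyfunD (PM i j) (PM' i j))) => v; rewrite mxE.
Qed.

Lemma polymxZ m k f (M : V -> 'M[R]_(m, k)) :
  polyfun f -> polymx M -> polymx (fun v => f v *: M v).
Proof.
move=> Pf PM i j.
by apply: (eq_polyfun (polyfunM Pf (PM i j))) => v; rewrite mxE.
Qed.

Lemma polymxM m k r (M : V -> 'M[R]_(m, k)) (M' : V -> 'M[R]_(k, r)) :
  polymx M -> polymx M' -> polymx (fun v => M v *m M' v).
Proof.
move=> PM PM' i j.
have Pij := @polyfun_sum _ (index_enum 'I_k) xpredT
  (fun l v => M v i l * M' v l j) (fun l => polyfunM (PM i l) (PM' l j)).
by apply: (eq_polyfun Pij) => v; rewrite mxE.
Qed.

Lemma polymxX m (M : V -> 'M[R]_m) k : polymx M -> polymx (fun v => M v ^+ k).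
Proof.
move=> PM; elim: k => [|k IHk] i j.
  by apply: (eq_polyfun (polymx_cst 1%:M i j)) => v; rewrite expr0.
by apply: (eq_polyfun (polymxM PM IHk i j)) => v; rewrite exprS mulmxE.
Qed.

Lemma polymx_sum m k (I : Type) (r : seq I) (P : pred I)
    (F : I -> V -> 'M[R]_(m, k)) :
  (forall l, polymx (F l)) -> polymx (fun v => \sum_(l <- r | P l) F l v).
Proof.
move=> PF i j.
have Pij := @polyfun_sum _ r P (fun l v => F l v i j) (fun l => PF l i j).
by apply: (eq_polyfun Pij) => v; rewrite summxE.
Qed.

Lemma polyfun_comp f (g : V -> V) : polyfun f -> polymx g -> polyfun (f \o g).
Proof.
move=> [P fP] /polymapP[Q gQ]; exists (P \mPo [tuple Q i | i < N]) => v.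
rewrite comp_mpoly_meval /= fP; apply: meval_eq => i.
by rewrite tnth_mktuple gQ.
Qed.

Lemma polymx_comp m k (M : V -> 'M[R]_(m, k)) (g : V -> V) :
  polymx M -> polymx g -> polymx (M \o g).
Proof. by move=> PM Pg i j; apply: (polyfun_comp (PM i j) Pg). Qed.

Lemma polyfun_ip : polyfun (fun v : V => ip v v).
Proof.
exact: polymxM (polymxM (polymx_tr polymx_id) (polymx_cst _)) polymx_id 0 0.
Qed.

Lemma polyfun_line f v u :
  polyfun f -> exists P : {poly R}, forall t, P.[t] = f (v + t *: u).
Proof.
move=> [F fF]; exists (mmap polyC (fun i => (v i 0)%:P + (u i 0)%:P * 'X) F).
move=> t; rewrite fF /meval /mmap horner_sum; apply: eq_bigr => m _.
rewrite hornerCM /mmap1 horner_prod; congr (_ * _); apply: eq_bigr => i _.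
by rewrite horner_exp hornerD hornerC hornerCM hornerX !mxE [t * _]mulrC.
Qed.

Lemma polyfun_mul_eq0 f g w : polyfun f -> polyfun g -> f w != 0 ->
  (forall v, f v * g v = 0) -> forall v, g v = 0.
Proof.
move=> Pf Pg fw fg0 v.
have [F Fline] := polyfun_line v (w - v) Pf.
have [G Gline] := polyfun_line v (w - v) Pg.
have Fw : F.[1] = f w by rewrite Fline scale1r addrC subrK.
have Gv : G.[0] = g v by rewrite Gline scale0r addr0.
have /eqP : F * G = 0.
  by apply: poly_eq0_of_horner_eq0 => t; rewrite hornerM Fline Gline fg0.
have F_neq0 : F != 0 by apply: contraNneq fw => F0; rewrite -Fw F0 horner0.
by rewrite mulf_eq0 (negPf F_neq0) => /eqP G0; rewrite -Gv G0 horner0.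
Qed.

End PolynomialFunctions.

Section Delta.
Variables (R : rcfType) (p q n l : nat) (lam : 'I_l -> R).
Variable S : 'cV[R]_(p + q) -> 'M[R]_(p + q).
Local Notation V := 'cV[R]_(p + q).

Lemma homog_polymx_polymx d : homog_polymx d S -> polymx S.
Proof. by move=> [P [_ SP]] i j; exists (P i j). Qed.

Lemma polymx_Aop : polymx S -> polymx (Aop n lam S).
Proof.
move=> PS; apply: polymxD; first exact: polymxX.
apply: polymx_sum => k; apply: polymxZ; last exact: polymxX.
apply: polyfunM; first exact: polyfun_cst.
exact: polyfunX _ polyfun_ip.
Qed.

Lemma Aop_conj (T : 'M[R]_(p + q)) w : T \in unitmx ->
  ip (T *m w) (T *m w) = ip w w -> S (T *m w) = T *m S w *m invmx T ->
  Aop n lam S (T *m w) = T *m Aop n lam S w *m invmx T.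
Proof.
move=> Tu Tip TS; rewrite /Aop TS Tip conj_mxX // mulmxDr mulmxDl.
rewrite mulmx_sumr mulmx_suml; congr (_ + _); apply: eq_bigr => k _.
by rewrite conj_mxX // scalemxAl scalemxAr.
Qed.

Lemma Delta_scale_cancel (x : V -> V) (f : V -> R) :
  polymx S -> polymap x -> polyfun f -> (exists w, f w != 0) ->
  Delta n lam S (fun v => f v *: x v) -> Delta n lam S x.
Proof.
move=> PS Px Pf [w fw] [_ Afx0]; split=> // v.
have PAx := polymxM (polymx_Aop PS) (iffLR (polymapP x) Px).
apply/matrixP => i j; rewrite [RHS]mxE.
apply: (polyfun_mul_eq0 Pf (PAx i j) fw) => u.
by have /matrixP/(_ i j) := Afx0 u; rewrite -scalemxAr !mxE.
Qed.

Lemma Delta_conj (T : 'M[R]_(p + q)) (x : V -> V) : T \in unitmx ->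
  (forall w, ip (T *m w) (T *m w) = ip w w) ->
  (forall w, S (T *m w) = T *m S w *m invmx T) ->
  Delta n lam S x -> Delta n lam S (fun v => T *m x (invmx T *m v)).
Proof.
move=> Tu Tip TS [Px Ax0]; split.
  apply/polymapP; apply: polymxM (polymx_cst T) (polymx_comp _ _).
    exact/polymapP.
  exact: polymxM (polymx_cst _) polymx_id.
move=> v; rewrite -{1}(mulKVmx Tu v) Aop_conj //.
by rewrite !mulmxA mulmxKV // -mulmxA Ax0 mulmx0.
Qed.

End Delta.

Theorem lemma5p4 (R : rcfType) (p q : nat) (G : 'M[R]_(p + q) -> Prop)
  (n l : nat) (lam : 'I_l -> R) (S : 'cV[R]_(p + q) -> 'M[R]_(p + q)) :
  (2 <= p)%N -> (p < q)%N -> (1 <= n)%N -> (1 <= l)%N ->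
  isometry_group G ->
  (exists v, S v != 0) ->
  (forall v x y, ip (S v *m x) y = ip x (S v *m y)) ->
  (forall v, S v *m v = 0) ->
  (forall v, S (- v) = - S v) ->
  (forall T v, G T -> S (T *m v) = T *m S v *m invmx T) ->
  homog_polymx (2 * n + 1) S ->
  (forall i, 0 < lam i) -> injective lam ->
  (forall v, ip v v = -1 -> forall z : R[i],
     cspec (S v) z <-> (z = 0 \/ exists i, z = Complex (lam i) 0 \/ z = Complex (- lam i) 0)) ->
  (forall (x : 'cV[R]_(p + q) -> 'cV[R]_(p + q)) (f : 'cV[R]_(p + q) -> R),
     polymap x -> polyfun f -> (exists v, f v != 0) ->
     Delta n lam S (fun v => f v *: x v) -> Delta n lam S x)
  /\
  (forall (T : 'M[R]_(p + q)) (x : 'cV[R]_(p + q) -> 'cV[R]_(p + q)),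
     G T -> Delta n lam S x ->
     Delta n lam S (fun v => T *m x (invmx T *m v))).
Proof.
move=> _ _ _ _ [_ G_isometry _ _ _] _ _ _ _ GS /homog_polymx_polymx PS _ _ _.
split=> [x f | T x GT]; first exact: Delta_scale_cancel.
have [Tu Tip] := G_isometry T GT.
by apply: Delta_conj => // w; apply: GS.
Qed.
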